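(* Let $A\in\mathbb{R}^{n\times d}$ have rows $\boldsymbol{a}_i^\top$, $\lambda>0$, let each $f_i$ be convex with conjugate $f_i^*$, and let $g$ be $\mu$-strongly convex and $L$-smooth. Let $\boldsymbol{x}^{(t)}$ with $\|\boldsymbol{x}^{(t)}\|_1\le\lambda$ and $\boldsymbol{y}^{(t)}\in\mathbb{R}^n$ be given, let $\bar{\boldsymbol{x}}^{(t)}=\arg\min_{\|\boldsymbol{x}\|_1\le\lambda}\mathcal{L}(\boldsymbol{x},\boldsymbol{y}^{(t)})$, let $s\ge\|\bar{\boldsymbol{x}}^{(t)}\|_0$ be an integer and $\eta=\frac{\mu}{2L}$, and define $\tilde{\boldsymbol{x}}\in\arg\min_{\|\boldsymbol{x}\|_1\le\lambda,\ \|\boldsymbol{x}\|_0\le s}\{\langle\frac1nA^\top\boldsymbol{y}^{(t)}+\nabla g(\boldsymbol{x}^{(t)}),\boldsymbol{x}\rangle+\frac L2\eta\|\boldsymbol{x}-\boldsymbol{x}^{(t)}\|^2\}$ and $\boldsymbol{x}^{(t+1)}=(1-\eta)\boldsymbol{x}^{(t)}+\eta\tilde{\boldsymbol{x}}$. Then $$\mathcal{L}(\boldsymbol{x}^{(t+1)},\boldsymbol{y}^{(t)})-\mathcal{L}(\bar{\boldsymbol{x}}^{(t)},\boldsymbol{y}^{(t)})\le\Big(1-\frac\eta2\Big)\Big(\mathcal{L}(\boldsymbol{x}^{(t)},\boldsymbol{y}^{(t)})-\mathcal{L}(\bar{\boldsymbol{x}}^{(t)},\boldsymbol{y}^{(t)})\Big),$$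 equivalently $(1-\frac\eta2)\big(\mathcal{L}(\boldsymbol{x}^{(t+1)},\boldsymbol{y}^{(t)})-\mathcal{L}(\boldsymbol{x}^{(t)},\boldsymbol{y}^{(t)})\big)\le-\frac\eta2\Delta_p^{(t)}$.
   Context: $\mathcal{L}(\boldsymbol{x},\boldsymbol{y})=g(\boldsymbol{x})+\frac1n\langle\boldsymbol{y},A\boldsymbol{x}\rangle-\frac1n\sum_{i=1}^nf_i^*(y_i)$. $\Delta_p^{(t)}=\mathcal{L}(\boldsymbol{x}^{(t+1)},\boldsymbol{y}^{(t)})-\mathcal{L}(\bar{\boldsymbol{x}}^{(t)},\boldsymbol{y}^{(t)})$. This is the primal step of the Primal-Dual Block Frank-Wolfe algorithm for the $\ell_1$ ball. *)

From HB Require Import structures.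
From mathcomp Require Import all_boot all_order all_algebra.
From mathcomp Require Import all_classical all_reals all_analysis.
Set Implicit Arguments. Unset Strict Implicit. Unset Printing Implicit Defensive.
Import Order.TTheory GRing.Theory Num.Theory.
Import numFieldNormedType.Exports.
Local Open Scope classical_set_scope.
Local Open Scope ring_scope.

Definition dotv {R : realType} {d : nat} (u v : 'rV[R]_d) : R :=
  \sum_(j < d) u 0 j * v 0 j.

Definition sqnorm2 {R : realType} {d : nat} (u : 'rV[R]_d) : R := dotv u u.
Definition norm2 {R : realType} {d : nat} (u : 'rV[R]_d) : R := Num.sqrt (sqnorm2 u).
Definition norm1 {R : realType} {d : nat} (u : 'rV[R]_d) : R :=
  \sum_(j < d) `|u 0 j|.
Definition norm0 {R : realType} {d : nat} (u : 'rV[R]_d) : nat :=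
  #|[set j : 'I_d | u 0 j != 0]|.

Definition gradient {R : realType} {d : nat} (g : 'rV[R]_d -> R) (x : 'rV[R]_d)
  : 'rV[R]_d := \row_(j < d) ('d g x (delta_mx 0 j : 'rV[R]_d)).

Definition convex_fun1 {R : realType} (f : R -> R) : Prop :=
  forall (x y t : R), 0 <= t <= 1 ->
    f (t * x + (1 - t) * y) <= t * f x + (1 - t) * f y.

Definition strongly_convex {R : realType} {d : nat} (mu : R) (g : 'rV[R]_d -> R)
  : Prop :=
  forall (x y : 'rV[R]_d) (t : R), 0 <= t <= 1 ->
    g (t *: x + (1 - t) *: y) <=
      t * g x + (1 - t) * g y - mu / 2 * t * (1 - t) * sqnorm2 (x - y).

Definition smooth {R : realType} {d : nat} (L : R) (g : 'rV[R]_d -> R) : Prop :=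
  (forall x, differentiable g x) /\
  forall x y : 'rV[R]_d, norm2 (gradient g x - gradient g y) <= L * norm2 (x - y).

Definition fconj {R : realType} (f : R -> R) (y : R) : \bar R :=
  ereal_sup [set ((x * y - f x)%:E) | x in [set: R]].

(* Lagrangian L(x,y) = g(x) + 1/n <y, A x> - 1/n sum_i f_i^*(y_i);
   A : n x d matrix, A x = x *m A^T, <y, A x> = <y *m A, x>. *)
Definition lagr {R : realType} {n d : nat} (A : 'M[R]_(n, d))
  (g : 'rV[R]_d -> R) (f : 'I_n -> R -> R) (x : 'rV[R]_d) (y : 'rV[R]_n) : R :=
  g x + n%:R^-1 * dotv y (x *m A^T) - n%:R^-1 * \sum_(i < n) fine (fconj (f i) (y 0 i)).

From HB Require Import structures.
From mathcomp Require Import all_boot all_order all_algebra.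
From mathcomp Require Import all_classical all_reals all_analysis.
From mathcomp Require Import ring lra.
Import Order.TTheory GRing.Theory Num.Theory.
Import numFieldNormedType.Exports.
Local Open Scope ring_scope.

(* Write Phi := L(., y^(t)) = g + <c, .> - K.  Since x^(t+1) - x^(t) = eta (x~ - x^(t)),
   the descent lemma for the L-smooth g gives
     Phi(x^(t+1)) - Phi(x^(t)) <= eta (obj x~ - <c + grad g(x^(t)), x^(t)>).
   As xbar is feasible for the sparse subproblem, obj x~ <= obj xbar, and the first-order
   inequality of strong convexity bounds obj xbar - <c + grad g(x^(t)), x^(t)> by
   Phi(xbar) - Phi(x^(t)) + (L eta / 2 - mu / 2) |xbar - x^(t)|^2, where L eta / 2 = mu / 4.
   Hence Phi(x^(t+1)) - Phi(xbar) <= (1 - eta) (Phi(x^(t)) - Phi(xbar)), which is at most the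
   claimed bound because xbar minimises Phi. *)

Section DotProduct.
Context {R : realType} {d : nat}.
Implicit Types u v w : 'rV[R]_d.

Lemma dotvC u v : dotv u v = dotv v u.
Proof. by apply: eq_bigr => j _; rewrite mulrC. Qed.

Lemma dotvDr u v w : dotv u (v + w) = dotv u v + dotv u w.
Proof. by rewrite /dotv -big_split; apply: eq_bigr => j _; rewrite !mxE mulrDr. Qed.

Lemma dotvZr u v k : dotv u (k *: v) = k * dotv u v.
Proof. by rewrite /dotv mulr_sumr; apply: eq_bigr => j _; rewrite !mxE mulrCA. Qed.

Lemma dotvNr u v : dotv u (- v) = - dotv u v.
Proof. by rewrite -scaleN1r dotvZr mulN1r. Qed.

Lemma dotvBr u v w : dotv u (v - w) = dotv u v - dotv u w.
Proof. by rewrite dotvDr dotvNr. Qed.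

Lemma dotv0l v : dotv 0 v = 0.
Proof. by rewrite -(scale0r 0) dotvC dotvZr mul0r. Qed.

Lemma dotvDl u v w : dotv (v + w) u = dotv v u + dotv w u.
Proof. by rewrite dotvC dotvDr !(dotvC u). Qed.

Lemma dotvZl u v k : dotv (k *: v) u = k * dotv v u.
Proof. by rewrite dotvC dotvZr dotvC. Qed.

Lemma dotvNl u v : dotv (- u) v = - dotv u v.
Proof. by rewrite dotvC dotvNr dotvC. Qed.

Lemma dotvBl u v w : dotv (v - w) u = dotv v u - dotv w u.
Proof. by rewrite dotvC dotvBr !(dotvC u). Qed.

Lemma sqnorm2_ge0 v : 0 <= sqnorm2 v.
Proof. by apply: sumr_ge0 => j _; rewrite -expr2 sqr_ge0. Qed.

Lemma sqnorm2_eq0 v : (sqnorm2 v == 0) = (v == 0).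
Proof.
apply/idP/eqP => [|->]; last by rewrite /sqnorm2 dotv0l.
rewrite /sqnorm2 /dotv psumr_eq0 => [/allP v0|j _]; last by rewrite -expr2 sqr_ge0.
apply/rowP => j; apply/eqP; rewrite mxE -[_ == _]orbb -mulf_eq0.
exact: v0 (mem_index_enum _).
Qed.

Lemma sqnorm2Z k v : sqnorm2 (k *: v) = k ^+ 2 * sqnorm2 v.
Proof. by rewrite /sqnorm2 dotvZl dotvZr mulrA expr2. Qed.

Lemma norm2_ge0 v : 0 <= norm2 v.
Proof. exact: sqrtr_ge0. Qed.

Lemma norm2_gt0 v : v != 0 -> 0 < norm2 v.
Proof. by rewrite sqrtr_gt0 lt_def sqnorm2_eq0 sqnorm2_ge0 andbT. Qed.

Lemma sqr_norm2 v : norm2 v ^+ 2 = sqnorm2 v.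
Proof. by rewrite sqr_sqrtr // sqnorm2_ge0. Qed.

Lemma norm2Z k v : norm2 (k *: v) = `|k| * norm2 v.
Proof. by rewrite /norm2 sqnorm2Z sqrtrM ?sqr_ge0 // sqrtr_sqr. Qed.

Lemma norm2N v : norm2 (- v) = norm2 v.
Proof. by rewrite -scaleN1r norm2Z normrN normr1 mul1r. Qed.

Lemma dotv_le_norm2 u v : dotv u v <= norm2 u * norm2 v.
Proof.
have [->|u0] := eqVneq u 0; first by rewrite dotv0l mulr_ge0 ?norm2_ge0.
have [->|v0] := eqVneq v 0; first by rewrite dotvC dotv0l mulr_ge0 ?norm2_ge0.
set a := norm2 u; set b := norm2 v.
have ab_gt0 : 0 < a * b by rewrite mulr_gt0 ?norm2_gt0.
have expand : sqnorm2 (b *: u - a *: v) = 2 * (a * b) * (a * b - dotv u v).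
  rewrite /sqnorm2 !(dotvBl, dotvBr, dotvZl, dotvZr) (dotvC v u).
  by rewrite -!/(sqnorm2 _) -!sqr_norm2 -/a -/b; ring.
have := sqnorm2_ge0 (b *: u - a *: v).
by rewrite expand pmulr_rge0 ?subr_ge0 // mulr_gt0.
Qed.

Lemma norm_dotv_le u v : `|dotv u v| <= norm2 u * norm2 v.
Proof.
rewrite ler_norml dotv_le_norm2 andbT lerNl -dotvNl.
by rewrite -[norm2 u]norm2N dotv_le_norm2.
Qed.

End DotProduct.

Section Gradient.
Context {R : realType} {d : nat}.
Implicit Types (g : 'rV[R]_d -> R) (x v : 'rV[R]_d).

Lemma diff_gradient g x v : 'd g x v = dotv (gradient g x) v.
Proof.
rewrite {1}(row_sum_delta v) linear_sum /dotv; apply: eq_bigr => j _.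
by rewrite linearZ /= mxE mulrC.
Qed.

Lemma is_derive_line g x v t : differentiable g (x + t *: v) ->
  is_derive t 1 (fun s : R => g (x + s *: v)) (dotv (gradient g (x + t *: v)) v).
Proof.
move=> dg.
have quotE : (fun h : R => h^-1 *: (((fun s : R => g (x + s *: v)) \o shift t) (h *: 1)
                                   - g (x + t *: v)))
    = (fun h : R => h^-1 *: ((g \o shift (x + t *: v)) (h *: v) - g (x + t *: v))).
  apply/funext => h /=; congr (_ *: (g _ - _)).
  by rewrite [_%:A]mulr1 scalerDl addrCA addrA.
apply: DeriveDef; first by rewrite /derivable quotE; exact: diff_derivable.
by rewrite /derive quotE -/(derive g _ v) deriveE // diff_gradient.
Qed.

End Gradient.

Section FirstOrderRemainder.
Local Open Scope classical_set_scope.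
Context {R : realType}.
Implicit Types (f df : R -> R) (M : R).

Lemma first_order_remainder_le f df M :
  (forall s : R, is_derive s 1 f (df s)) ->
  (forall s, 0 < s < 1 -> df s - df 0 <= M * s) ->
  f 1 - f 0 - df 0 <= M / 2.
Proof.
move=> f_df df_le.
(* apply the mean value theorem to [f] minus its quadratic model *)
pose psi : R -> R := f - (df 0 \*: @id R) - (M / 2 \*: (@id R * @id R)).
have psi_d (s : R) : is_derive s 1 psi (df s - df 0 - M * s).
  apply: is_derive_eq; rewrite /= ![_%:A]mulr1.
  by rewrite -[_ *: _]/(M / 2 * (s + s)) mulrDr -mulrDl -splitr.
have psi_cont : {within `[0, 1], continuous psi}.
  by apply: derivable_within_continuous => s _; have [] := psi_d s.
have [c /[!in_itv]/= c01 psi_mvt] := MVT ltr01 (fun s _ => psi_d s) psi_cont.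
have psiE (s : R) : psi s = f s - df 0 * s - M / 2 * (s * s) by [].
have := df_le c c01; move: psi_mvt; rewrite !psiE.
lra.
Qed.

Lemma norm_first_order_remainder_le f df M :
  (forall s : R, is_derive s 1 f (df s)) ->
  (forall s, 0 < s < 1 -> `|df s - df 0| <= M * s) ->
  `|f 1 - f 0 - df 0| <= M / 2.
Proof.
move=> f_df df_le; rewrite ler_norml; apply/andP; split; last first.
  by apply: first_order_remainder_le => // s /df_le /ler_normlP[].
rewrite lerNl.
have -> : - (f 1 - f 0 - df 0) = (- f) 1 - (- f) 0 - (- df) 0.
  by rewrite !opprfctE /=; lra.
apply: first_order_remainder_le => s /df_le /ler_normlP[+ _].
by rewrite !opprfctE /=; lra.
Qed.

End FirstOrderRemainder.

Lemma le_of_forall_le_addr_scaled {R : realFieldType} (a b k : R) :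
  (forall t, 0 < t <= 1 -> a <= b + t * k) -> a <= b.
Proof.
move=> le_abk; apply/ler_addgt0Pr => e e_gt0.
pose t := Num.min 1 (e / (`|k| + 1)).
have k1_gt0 : 0 < `|k| + 1 by rewrite ltr_wpDl.
have t_gt0 : 0 < t by rewrite lt_min ltr01 divr_gt0.
have t_le : t <= e / (`|k| + 1) by rewrite ge_min lexx orbT.
have tk_le : t * (`|k| + 1) <= e by rewrite -ler_pdivlMr.
apply: le_trans (le_abk t _) _; first by rewrite t_gt0 ge_min lexx.
by rewrite lerD2l (le_trans _ tk_le) // ler_pM2l // ler_wpDr // ler_norm.
Qed.

Section SmoothStronglyConvex.
Context {R : realType} {d : nat} {mu L : R} {g : 'rV[R]_d -> R}.
Hypothesis g_smooth : smooth L g.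
Implicit Types x y v : 'rV[R]_d.

Lemma smooth_remainder_le x v :
  `|g (x + v) - g x - dotv (gradient g x) v| <= L / 2 * sqnorm2 v.
Proof.
have [g_diff g_lip] := g_smooth.
have := @norm_first_order_remainder_le _ (fun s => g (x + s *: v))
  (fun s => dotv (gradient g (x + s *: v)) v) (L * sqnorm2 v).
rewrite scale1r scale0r addr0 mulrAC; apply => [s|s /andP[s_gt0 _]].
  exact: is_derive_line.
rewrite -dotvBl; apply: le_trans (norm_dotv_le _ _) _.
have := g_lip (x + s *: v) x.
rewrite [x + _ - x]addrC addKr norm2Z gtr0_norm // => lip.
have -> : L * sqnorm2 v * s = L * (s * norm2 v) * norm2 v by rewrite -sqr_norm2; ring.
by rewrite ler_wpM2r ?norm2_ge0.
Qed.

Hypothesis g_sc : strongly_convex mu g.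

Lemma strongly_convex_gradient_ge x y :
  g x + dotv (gradient g x) (y - x) + mu / 2 * sqnorm2 (y - x) <= g y.
Proof.
set v := y - x.
(* strong convexity on [[x, y]] and the smoothness lower bound at [x + t v]
   give the claim up to an error O(t) *)
apply: (@le_of_forall_le_addr_scaled _ _ _ ((mu + L) / 2 * sqnorm2 v)).
move=> t /andP[t_gt0 t_le1].
have := g_sc y x t; rewrite ltW //= -/v => /(_ t_le1).
have -> : t *: y + (1 - t) *: x = x + t *: v by apply/rowP => j; rewrite !mxE; ring.
move=> sc; rewrite -(ler_pM2l t_gt0).
have := smooth_remainder_le x (t *: v); rewrite dotvZr sqnorm2Z => /ler_normlP[lb _].
lra.
Qed.

End SmoothStronglyConvex.

Lemma dotv_mul_tr {R : realType} {n d : nat} (A : 'M[R]_(n, d))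
    (x : 'rV[R]_d) (y : 'rV[R]_n) :
  dotv y (x *m A^T) = dotv (y *m A) x.
Proof.
rewrite /dotv; under eq_bigr do rewrite mxE mulr_sumr.
rewrite exchange_big /=; apply: eq_bigr => j _.
by rewrite mxE mulr_suml; apply: eq_bigr => i _; rewrite mxE mulrA mulrAC.
Qed.

Theorem lemma1 (R : realType) (n d : nat) (A : 'M[R]_(n, d)) (lam : R)
  (f : 'I_n -> R -> R) (g : 'rV[R]_d -> R) (mu L : R)
  (xt xbar xtil : 'rV[R]_d) (yt : 'rV[R]_n) (s : nat) :
  (0 < n)%N -> 0 < lam ->
  (forall i, convex_fun1 (f i)) ->
  (forall i, fconj (f i) (yt 0 i) \is a fin_num) ->
  0 < mu -> 0 < L -> strongly_convex mu g -> smooth L g ->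
  norm1 xt <= lam ->
  norm1 xbar <= lam ->
  (forall x, norm1 x <= lam -> lagr A g f xbar yt <= lagr A g f x yt) ->
  (norm0 xbar <= s)%N ->
  let eta := mu / (2 * L) in
  let obj := fun x : 'rV[R]_d =>
    dotv (n%:R^-1 *: (yt *m A) + gradient g xt) x
    + L / 2 * eta * sqnorm2 (x - xt) in
  norm1 xtil <= lam -> (norm0 xtil <= s)%N ->
  (forall x, norm1 x <= lam -> (norm0 x <= s)%N -> obj xtil <= obj x) ->
  let xnext := (1 - eta) *: xt + eta *: xtil in
  lagr A g f xnext yt - lagr A g f xbar yt <=
    (1 - eta / 2) * (lagr A g f xt yt - lagr A g f xbar yt).
Proof.
move=> _ _ _ _ mu_gt0 L_gt0 g_sc g_smooth xt_feas xbar_feas xbar_min xbar_sparse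
  eta obj _ _ xtil_min.
rewrite [in X in is_true X]/=; set xnext := (1 - eta) *: xt + eta *: xtil.
set c := n%:R^-1 *: (yt *m A); set G := gradient g xt.
set K := n%:R^-1 * \sum_(i < n) fine (fconj (f i) (yt 0 i)).
have lagrE x : lagr A g f x yt = g x + dotv c x - K by rewrite /lagr dotv_mul_tr dotvZl.
have eta_gt0 : 0 < eta by rewrite divr_gt0 ?mulr_gt0.
have L_eta : L / 2 * eta = mu / 4 by rewrite /eta; field; rewrite gt_eqF.
have xnextE : xnext = xt + eta *: (xtil - xt).
  by apply/rowP => j; rewrite !mxE; ring.
have model_le : obj xtil - dotv (c + G) xt <= lagr A g f xbar yt - lagr A g f xt yt.
  have := xtil_min xbar xbar_feas xbar_sparse.
  have := strongly_convex_gradient_ge g_smooth g_sc xt xbar.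
  have := mulr_ge0 (ltW mu_gt0) (sqnorm2_ge0 (xbar - xt)).
  rewrite /obj !lagrE !dotvDl !dotvBr L_eta; lra.
have step_le : lagr A g f xnext yt - lagr A g f xt yt
    <= eta * (lagr A g f xbar yt - lagr A g f xt yt).
  apply: le_trans (ler_wpM2l (ltW eta_gt0) model_le).
  have dotv_next : dotv c xnext = dotv c xt + eta * (dotv c xtil - dotv c xt).
    by rewrite xnextE dotvDr dotvZr dotvBr.
  have := smooth_remainder_le g_smooth xt (eta *: (xtil - xt)).
  rewrite -xnextE dotvZr sqnorm2Z => /ler_normlP[_].
  rewrite /obj !lagrE dotv_next !dotvDl !dotvBr; lra.
have := xbar_min xt xt_feas; rewrite -subr_ge0 => /(mulr_ge0 (ltW eta_gt0)).
lra.
Qed.
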